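(* In the setting of the context, assume $q<q_c$ and let $\beta\in(0,1)$. For the estimate $\hat q$ (when $\hat q<q_c$), let $\bar q$ be the optimal value of the problem $$\max_{x\in[0,1]} x\quad\text{s.t.}\quad x\ge\hat q,\quad Q+(1-x)\hat K^\top R\hat K-(x-\hat q)A^\top\hat PB(R+B^\top\hat PB)^{-1}B^\top\hat PA\succ0 .$$ Then with probability at least $1-\beta$ (over the samples) the following holds: if $\hat q<q_c$ and $\bar q\ge\hat q+\Delta(N_q,\beta)$, where $\Delta(N_q,\beta)=\sqrt{\log(2/\beta)/(2N_q)}$, then $\hat K$ mean-square stabilizes the system.
   Context: Let $A\in\mathbb{R}^{n\times n}$, $B\in\mathbb{R}^{n\times m}$ with $(A,B)$ stabilizable, and let $Q$, $R$ be symmetric positive definite. Consider $x_{t+1}=Ax_t+\lambda_tBu_t$, $t\ge0$, with $x_0$ random with finite mean and covariance and $\{\lambda_t\}$ i.i.d. Bernoulli, independent of $x_0$, with $\mathcal{P}(\lambda_t=0)=q$, $q\in(0,1)$ unknown. The estimate is $\hat q=\frac1{N_q}\sum_{i=1}^{N_q}(1-\lambda_i)$ from $N_q$ i.i.d. samples with the same Bernoulli law. For $p\in[0,1)$ the modified Riccati equation with parameter $p$ is $X=Q+A^\top XA-(1-p)A^\top XB(R+B^\top XB)^{-1}B^\top XA$; $q_c$ is the critical loss probability such that for every $p\in[0,q_c)$ this equation has a unique positive definite solution. For $\hat q\in[0,q_c)$, $\hat P$ is the positive definite solution for parameter $\hat q$ and $\hat K=-(R+B^\top\hat PB)^{-1}B^\top\hat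 PA$. $\hat K$ mean-square stabilizes the system if the closed loop $x_{t+1}=(A+\lambda_tB\hat K)x_t$ satisfies $\lim_{t\to\infty}\mathbb{E}\{x_t^\top x_t\}=0$. *)

From HB Require Import structures.
From mathcomp Require Import all_boot all_order all_algebra.
From mathcomp Require Import all_classical all_reals all_analysis.
Set Implicit Arguments. Unset Strict Implicit. Unset Printing Implicit Defensive.
Import Order.TTheory GRing.Theory Num.Theory.
Import numFieldNormedType.Exports.
Local Open Scope classical_set_scope.
Local Open Scope ring_scope.

Section Defs.
Variable R : realType.

Definition posdef (n : nat) (M : 'M[R]_n) : Prop :=
  M^T = M /\ forall x : 'cV[R]_n, x != 0 -> 0 < (x^T *m M *m x) 0 0.

Fixpoint det_state (n : nat) (F : 'M[R]_n) (x0 : 'cV[R]_n) (t : nat) : 'cV[R]_n :=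
  match t with 0 => x0 | t'.+1 => F *m det_state F x0 t' end.

Definition stabilizable (n m : nat) (A : 'M[R]_n) (B : 'M[R]_(n, m)) : Prop :=
  exists K : 'M[R]_(m, n), forall (x0 : 'cV[R]_n) (i : 'I_n),
    (fun t => det_state (A + B *m K) x0 t i 0) @ \oo --> (0 : R).

Definition riccati (n m : nat) (A : 'M[R]_n) (B : 'M[R]_(n, m))
  (Q : 'M[R]_n) (Rw : 'M[R]_m) (p : R) (X : 'M[R]_n) : Prop :=
  X = Q + A^T *m X *m A
      - (1 - p) *: (A^T *m X *m B *m invmx (Rw + B^T *m X *m B) *m B^T *m X *m A).

Definition gain (n m : nat) (A : 'M[R]_n) (B : 'M[R]_(n, m)) (Rw : 'M[R]_m)
  (P : 'M[R]_n) : 'M[R]_(m, n) :=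
  - (invmx (Rw + B^T *m P *m B) *m B^T *m P *m A).

(* closed-loop state x_t = (A+λ_{t-1}BK)...(A+λ_0BK) x_0 along a
   packet-arrival sequence lam (lam t = true iff λ_t = 1) *)
Fixpoint cl_state (n m : nat) (A : 'M[R]_n) (B : 'M[R]_(n, m)) (K : 'M[R]_(m, n))
  (lam : nat -> bool) (x0 : 'cV[R]_n) (t : nat) : 'cV[R]_n :=
  match t with
  | 0 => x0
  | t'.+1 => (A + (lam t')%:R *: (B *m K)) *m cl_state A B K lam x0 t'
  end.

Definition bern_prob (q : R) (k : nat) (s : {ffun 'I_k -> bool}) : R :=
  \prod_(i < k) (if s i then 1 - q else q).

Definition ext_path (k : nat) (s : {ffun 'I_k -> bool}) : nat -> bool :=
  fun i => match insub i with Some j => s j | None => false end.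

(* E{x_t^T x_t} when x_0 ~ P (on a probability space) and λ_0..λ_{t-1}
   i.i.d. Bernoulli independent of x_0: expectation over the product
   space, written as a finite sum over the λ-paths of the x_0-expectation. *)
Definition ms_energy (n m : nat) (A : 'M[R]_n) (B : 'M[R]_(n, m)) (K : 'M[R]_(m, n))
  (q : R) (d : measure_display) (T : measurableType d) (P : probability T R)
  (x0 : T -> 'cV[R]_n) (t : nat) : R :=
  \sum_(s : {ffun 'I_t -> bool})
    bern_prob q s *
    fine (\int[P]_w (((cl_state A B K (ext_path s) (x0 w) t)^T
                        *m cl_state A B K (ext_path s) (x0 w) t) 0 0)%:E).

(* K mean-square stabilizes x_{t+1} = (A + λ_t B K) x_t, P(λ_t = 0) = q:
   for every random initial state with finite mean and covariance
   (measurable with square-integrable entries), E{x_t^T x_t} -> 0. *)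
Definition ms_stabilizes (n m : nat) (A : 'M[R]_n) (B : 'M[R]_(n, m))
  (K : 'M[R]_(m, n)) (q : R) : Prop :=
  forall (d : measure_display) (T : measurableType d) (P : probability T R)
    (x0 : T -> 'cV[R]_n),
    (forall i : 'I_n, measurable_fun setT (fun w => x0 w i 0)) ->
    (forall i : 'I_n, P.-integrable setT (fun w => ((x0 w i 0) ^+ 2)%:E)) ->
    (fun t => ms_energy A B K q P x0 t) @ \oo --> (0 : R).

Definition qhat (N : nat) (s : {ffun 'I_N -> bool}) : R :=
  (\sum_(i < N) (~~ s i)%:R) / N%:R.

Definition sample_prob (q : R) (N : nat) (E : {ffun 'I_N -> bool} -> Prop) : R :=
  \sum_(s : {ffun 'I_N -> bool} | `[< E s >]) bern_prob q s.

Definition Delta (N : nat) (beta : R) : R :=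
  Num.sqrt (ln (2 / beta) / (2 * N%:R)).

Definition qbar (n m : nat) (A : 'M[R]_n) (B : 'M[R]_(n, m))
  (Q : 'M[R]_n) (Rw : 'M[R]_m) (qh : R) (Ph : 'M[R]_n) : R :=
  let Kh := gain A B Rw Ph in
  sup [set x : R | 0 <= x <= 1 /\ qh <= x /\
        posdef (Q + (1 - x) *: (Kh^T *m Rw *m Kh)
                  - (x - qh) *: (A^T *m Ph *m B *m invmx (Rw + B^T *m Ph *m B)
                                  *m B^T *m Ph *m A))].

End Defs.

(* Hoeffding's inequality for the sample mean gives [q < qhat + Delta <= qbar] with
   probability at least [1 - beta], so some feasible point [e] of the LMI exceeds [q].
   With [G = A'PB (R + B'PB)^-1 B'PA], the modified Riccati equation at [qhat] gives,
   for the true loss probability [q], the one-step identity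
     E[x1' P x1 | x0 = x] = x'Px - x'(Q + (1 - q) K'RK + (qhat - q) G)x,
   and for [e >= q] the matrix in parentheses dominates the LMI matrix at [e], which is
   positive definite. Hence [x'Px] is a stochastic Lyapunov function contracting by a
   fixed factor, [E|x_t|^2] decays geometrically for every initial state, and integrating
   over the random initial state gives mean-square stability. *)

From HB Require Import structures.
From mathcomp Require Import all_boot all_order all_algebra.
From mathcomp Require Import all_classical all_reals all_analysis.
From mathcomp Require Import measurable_realfun ring lra.
Import Order.TTheory GRing.Theory Num.Theory.
Import numFieldNormedType.Exports.
Set Implicit Arguments. Unset Strict Implicit. Unset Printing Implicit Defensive.
Local Open Scope ring_scope.

Section QuadraticForms.
Variable R : realType.

Definition bform n (M : 'M[R]_n) (x y : 'cV[R]_n) : R := (x^T *m M *m y) 0 0.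
Definition qform n (M : 'M[R]_n) (x : 'cV[R]_n) : R := bform M x x.

Lemma bformE n (M : 'M[R]_n) x y :
  bform M x y = \sum_j (\sum_i x i 0 * M i j) * y j 0.
Proof.
rewrite /bform mxE; apply: eq_bigr => j _; rewrite !mxE; congr (_ * _).
by apply: eq_bigr => i _; rewrite !mxE.
Qed.

Lemma bform_tr n (M : 'M[R]_n) x y : bform M x y = bform M^T y x.
Proof.
have -> : bform M x y = (x^T *m M *m y)^T 0 0 by rewrite mxE.
by rewrite !trmx_mul trmxK mulmxA.
Qed.

Lemma bformDl n (M : 'M[R]_n) x1 x2 y : bform M (x1 + x2) y = bform M x1 y + bform M x2 y.
Proof. by rewrite /bform linearD /= !mulmxDl mxE. Qed.

Lemma bformDr n (M : 'M[R]_n) x y1 y2 : bform M x (y1 + y2) = bform M x y1 + bform M x y2.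
Proof. by rewrite /bform !mulmxDr mxE. Qed.

Lemma bformZl n (M : 'M[R]_n) a x y : bform M (a *: x) y = a * bform M x y.
Proof. by rewrite /bform linearZ /= -!scalemxAl mxE. Qed.

Lemma bformZr n (M : 'M[R]_n) a x y : bform M x (a *: y) = a * bform M x y.
Proof. by rewrite /bform -!scalemxAr mxE. Qed.

Lemma bformNl n (M : 'M[R]_n) x y : bform M (- x) y = - bform M x y.
Proof. by rewrite -scaleN1r bformZl mulN1r. Qed.

Lemma bformNr n (M : 'M[R]_n) x y : bform M x (- y) = - bform M x y.
Proof. by rewrite -scaleN1r bformZr mulN1r. Qed.

Lemma bform0l n (M : 'M[R]_n) y : bform M 0 y = 0.
Proof. by rewrite /bform trmx0 !mul0mx mxE. Qed.

Lemma bformMD n (M N : 'M[R]_n) x y : bform (M + N) x y = bform M x y + bform N x y.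
Proof. by rewrite /bform mulmxDr mulmxDl mxE. Qed.

Lemma bformMZ n (M : 'M[R]_n) a x y : bform (a *: M) x y = a * bform M x y.
Proof. by rewrite /bform -scalemxAr -scalemxAl mxE. Qed.

Lemma bformMN n (M : 'M[R]_n) x y : bform (- M) x y = - bform M x y.
Proof. by rewrite -scaleN1r bformMZ mulN1r. Qed.

Lemma bform_congr n k (F : 'M[R]_(n, k)) (M : 'M[R]_n) x y :
  bform (F^T *m M *m F) x y = bform M (F *m x) (F *m y).
Proof. by rewrite /bform trmx_mul !mulmxA. Qed.

Lemma bform_mulmxr n (M N : 'M[R]_n) x y : bform M x (N *m y) = bform (M *m N) x y.
Proof. by rewrite /bform !mulmxA. Qed.

Lemma bform_mulmxl n k (M : 'M[R]_n) (F : 'M[R]_(n, k)) x y :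
  bform M (F *m x) y = bform 1%:M x (F^T *m M *m y).
Proof. by rewrite /bform trmx_mul mulmx1 !mulmxA. Qed.

Lemma qform1E n (x : 'cV[R]_n) : qform 1%:M x = \sum_i x i 0 ^+ 2.
Proof.
rewrite /qform bformE; apply: eq_bigr => j _.
rewrite (bigD1 j) //= big1 ?addr0 ?mxE ?eqxx ?mulr1 ?expr2 // => i /negbTE nij.
by rewrite mxE nij mulr0.
Qed.

Lemma qform1_tr n (x : 'cV[R]_n) : (x^T *m x) 0 0 = qform 1%:M x.
Proof. by rewrite /qform /bform mulmx1. Qed.

Lemma sqr_entry_le_qform1 n (x : 'cV[R]_n) i : x i 0 ^+ 2 <= qform 1%:M x.
Proof. by rewrite qform1E (bigD1 i) //= lerDl sumr_ge0 // => k _; rewrite sqr_ge0. Qed.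

Lemma qform1_ge0 n (x : 'cV[R]_n) : 0 <= qform 1%:M x.
Proof. by rewrite qform1E sumr_ge0 // => i _; rewrite sqr_ge0. Qed.

Lemma qform1_gt0 n (x : 'cV[R]_n) : x != 0 -> 0 < qform 1%:M x.
Proof.
move=> nx; have [i xi] : exists i, x i 0 != 0.
  apply/existsP; apply: contraNT nx; rewrite negb_exists => /forallP x0.
  by apply/eqP/matrixP => i j; rewrite (ord1 j) mxE; move: (x0 i); rewrite negbK => /eqP.
by apply: lt_le_trans (sqr_entry_le_qform1 x i); rewrite lt_def sqrf_eq0 xi sqr_ge0.
Qed.

Lemma posdef_qform_ge0 n (M : 'M[R]_n) x : posdef M -> 0 <= qform M x.
Proof.
move=> [_ M_gt0]; have [->|nx] := eqVneq x 0; first by rewrite /qform bform0l.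
exact/ltW/M_gt0.
Qed.

Lemma posdef_unitmx n (M : 'M[R]_n) : posdef M -> M \in unitmx.
Proof.
move=> [_ M_gt0]; rewrite unitmxE unitfE; apply/negP => /det0P [v nv vM].
have /M_gt0 : v^T != 0 by apply: contra nv => /eqP v0; rewrite -[v]trmxK v0 trmx0.
by rewrite trmxK vM mul0mx mxE ltxx.
Qed.

Lemma qform_le_norm n (M : 'M[R]_n) :
  exists2 d, 0 <= d & forall x, qform M x <= d * qform 1%:M x.
Proof.
exists (\sum_j \sum_i `|M i j|) => [|x]; first by do 2![apply: sumr_ge0 => ? _].
rewrite {1}/qform bformE mulr_suml; apply: ler_sum => j _.
rewrite !mulr_suml; apply: ler_sum => i _; rewrite mulrAC mulrC.
apply: le_trans (ler_norm _) _; rewrite normrM ler_wpM2l //.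
have := sqr_entry_le_qform1 x i; have := sqr_entry_le_qform1 x j.
have := sqr_ge0 (`|x i 0| - `|x j 0|).
rewrite sqrrB !real_normK ?num_real // normrM mulr2n; lra.
Qed.

Lemma posdef_cauchy_schwarz n (M : 'M[R]_n) x y :
  posdef M -> bform M x y ^+ 2 <= qform M x * qform M y.
Proof.
move=> pM; have [Ms M_gt0] := pM.
have [->|nx] := eqVneq x 0; first by rewrite /qform !bform0l expr0n mul0r.
set a := qform M x; set b := bform M x y; set c := qform M y.
have a_gt0 : 0 < a := M_gt0 _ nx.
have := posdef_qform_ge0 (a *: y - b *: x) pM.
rewrite /qform bformDl !bformDr !bformNl !bformNr !bformZl !bformZr.
rewrite (bform_tr M y x) Ms -/(qform M x) -/(qform M y) -/a -/b -/c => h.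
nra.
Qed.

Lemma posdef_norm_le n (M : 'M[R]_n) :
  posdef M -> exists2 c, 0 < c & forall x, qform 1%:M x <= c * qform M x.
Proof.
move=> pM; have [Ms _] := pM; have Mu := posdef_unitmx pM.
have [d d_ge0 Hd] := qform_le_norm (invmx M).
exists (d + 1) => [|x]; first by rewrite ltr_wpDl.
have [->|nx] := eqVneq x 0; first by rewrite /qform !bform0l mulr0.
set v := invmx M *m x.
have bxv : bform M x v = qform 1%:M x.
  by rewrite /bform /qform mulmxA -(mulmxA _ M) mulmxV // mulmx1.
have qv : qform M v = qform (invmx M) x.
  rewrite /qform /bform /v -(mulmxA _ M) (mulmxA M) mulmxV // mul1mx trmx_mul.
  by rewrite trmx_inv Ms.
have := posdef_cauchy_schwarz x v pM; rewrite bxv qv.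
have := Hd x; have := qform1_gt0 nx; have := posdef_qform_ge0 x pM.
move: (qform M x) (qform 1%:M x) (qform (invmx M) x) => a b c; nra.
Qed.

Lemma posdef_qform_contraction n (P M : 'M[R]_n) : posdef P -> posdef M ->
  exists2 rho, 0 <= rho < 1 & forall x, qform P x - qform M x <= rho * qform P x.
Proof.
move=> pP pM; have [c c_gt0 Hc] := posdef_norm_le pM.
have [d d_ge0 Hd] := qform_le_norm P.
have k_ge1 : 1 <= c * d + 1 by rewrite lerDr mulr_ge0 // ltW.
have k_gt0 : 0 < c * d + 1 by apply: lt_le_trans k_ge1.
exists (1 - (c * d + 1)^-1) => [|x].
  by rewrite subr_ge0 invf_le1 // k_ge1 ltrBlDr ltrDl invr_gt0.
have PkM : qform P x <= qform M x * (c * d + 1).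
  have := Hd x; have := Hc x; have := posdef_qform_ge0 x pM; nra.
by rewrite mulrBl mul1r lerD2l lerN2 mulrC ler_pdivrMr.
Qed.

End QuadraticForms.

Section BernoulliPaths.
Variable R : realType.

Definition scons (b : bool) (l : nat -> bool) : nat -> bool :=
  fun i => if i is j.+1 then l j else b.

Definition ffun_cons t (p : bool * {ffun 'I_t -> bool}) : {ffun 'I_t.+1 -> bool} :=
  [ffun i => if unlift ord0 i is Some j then p.2 j else p.1].

Definition ffun_uncons t (s : {ffun 'I_t.+1 -> bool}) : bool * {ffun 'I_t -> bool} :=
  (s ord0, [ffun j => s (lift ord0 j)]).

Lemma ffun_consK t : cancel (@ffun_cons t) (@ffun_uncons t).
Proof.
move=> [b s]; rewrite /ffun_uncons /ffun_cons /= ffunE unlift_none; congr pair.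
by apply/ffunP => j; rewrite !ffunE liftK.
Qed.

Lemma ffun_unconsK t : cancel (@ffun_uncons t) (@ffun_cons t).
Proof.
move=> s; apply/ffunP => i; rewrite /ffun_uncons /ffun_cons /= ffunE.
by case: unliftP => [j ->|->] /=; rewrite ?ffunE.
Qed.

Lemma ext_path_cons t b (s : {ffun 'I_t -> bool}) :
  ext_path (ffun_cons (b, s)) = scons b (ext_path s).
Proof.
apply: funext => -[|k]; rewrite /ext_path /scons.
  case: insubP => [j _ j0|//]; rewrite (_ : j = ord0); last exact: val_inj.
  by rewrite ffunE unlift_none.
case: insubP => [j _ jk|]; case: insubP => [j' _ j'k|] //=.
- by rewrite (_ : j = lift ord0 j') ?ffunE ?liftK //; apply: val_inj; rewrite /= jk j'k.
- by rewrite -ltnS -jk ltn_ord.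
- by rewrite ltnS -j'k ltn_ord.
Qed.

Lemma bern_prob_cons (q : R) t b (s : {ffun 'I_t -> bool}) :
  bern_prob q (ffun_cons (b, s)) = (if b then 1 - q else q) * bern_prob q s.
Proof.
rewrite /bern_prob big_ord_recl ffunE unlift_none; congr (_ * _).
by apply: eq_bigr => i _; rewrite ffunE liftK.
Qed.

Lemma bern_prob_ge0 (q : R) t (s : {ffun 'I_t -> bool}) :
  0 <= q <= 1 -> 0 <= bern_prob q s.
Proof.
by case/andP=> q0 q1; apply: prodr_ge0 => i _; case: (s i); rewrite ?subr_ge0.
Qed.

Lemma bern_prob_sum1 (q : R) t : \sum_(s : {ffun 'I_t -> bool}) bern_prob q s = 1.
Proof.
rewrite /bern_prob -(bigA_distr_bigA (fun _ (b : bool) => if b then 1 - q else q)) /=.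
by rewrite big1 // => i _; rewrite big_bool /= subrK.
Qed.

Lemma sum_bern_pathsS (q : R) t (G : (nat -> bool) -> R) :
  \sum_(s : {ffun 'I_t.+1 -> bool}) bern_prob q s * G (ext_path s) =
  q * \sum_(s : {ffun 'I_t -> bool}) bern_prob q s * G (scons false (ext_path s)) +
  (1 - q) * \sum_(s : {ffun 'I_t -> bool}) bern_prob q s * G (scons true (ext_path s)).
Proof.
rewrite (reindex (@ffun_cons t)) /=; last first.
  by exists (@ffun_uncons t) => x _; [apply: ffun_consK | apply: ffun_unconsK].
rewrite -(pair_big xpredT xpredT
  (fun b s => bern_prob q (ffun_cons (b, s)) * G (ext_path (ffun_cons (b, s))))) /=.
rewrite big_bool /= addrC !mulr_sumr; congr (_ + _); apply: eq_bigr => s _;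
  by rewrite bern_prob_cons ext_path_cons mulrA.
Qed.

End BernoulliPaths.

Section ClosedLoop.
Variables (R : realType) (n m : nat).
Variables (A : 'M[R]_n) (B : 'M[R]_(n, m)) (K : 'M[R]_(m, n)).

Definition cl_mx (b : bool) : 'M[R]_n := A + b%:R *: (B *m K).

Fixpoint cl_transition (lam : nat -> bool) (t : nat) : 'M[R]_n :=
  if t is t'.+1 then cl_mx (lam t') *m cl_transition lam t' else 1%:M.

Lemma cl_stateE lam x t : cl_state A B K lam x t = cl_transition lam t *m x.
Proof. by elim: t => [|t IH] /=; rewrite ?mul1mx // IH mulmxA. Qed.

Lemma cl_stateS lam x t :
  cl_state A B K lam x t.+1 = cl_state A B K (fun i => lam i.+1) (cl_mx (lam 0%N) *m x) t.
Proof.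
elim: t => [|t IH] //.
by rewrite -[LHS]/(cl_mx (lam t.+1) *m cl_state A B K lam x t.+1) IH.
Qed.

Definition path_mean (q : R) (f : 'cV[R]_n -> R) t (x : 'cV[R]_n) : R :=
  \sum_(s : {ffun 'I_t -> bool}) bern_prob q s * f (cl_state A B K (ext_path s) x t).

Lemma path_mean0 q f x : path_mean q f 0 x = f x.
Proof.
rewrite /path_mean (eq_bigr (fun _ => f x)) => [|s _]; last first.
  by rewrite /bern_prob big_ord0 mul1r.
by rewrite sumr_const card_ffun card_ord expn0 mulr1n.
Qed.

Lemma path_meanS q f t x : path_mean q f t.+1 x =
  q * path_mean q f t (cl_mx false *m x) + (1 - q) * path_mean q f t (cl_mx true *m x).
Proof.
rewrite /path_mean (sum_bern_pathsS q t (fun l => f (cl_state A B K l x t.+1))).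
by congr (_ * _ + _ * _); apply: eq_bigr => s _; rewrite cl_stateS.
Qed.

Lemma path_mean_ge0 q f t x :
  0 <= q <= 1 -> (forall y, 0 <= f y) -> 0 <= path_mean q f t x.
Proof. by move=> q01 f_ge0; apply: sumr_ge0 => s _; rewrite mulr_ge0 ?bern_prob_ge0. Qed.

Lemma path_mean_le q f g c t x : 0 <= q <= 1 -> (forall y, f y <= c * g y) ->
  path_mean q f t x <= c * path_mean q g t x.
Proof.
move=> q01 fg; rewrite /path_mean mulr_sumr; apply: ler_sum => s _.
by rewrite mulrCA ler_wpM2l ?bern_prob_ge0.
Qed.

Lemma path_mean_geometric q f rho : 0 <= q <= 1 -> 0 <= rho ->
  (forall x, q * f (cl_mx false *m x) + (1 - q) * f (cl_mx true *m x) <= rho * f x) ->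
  forall t x, path_mean q f t x <= rho ^+ t * f x.
Proof.
move=> /andP[q0 q1] rho0 f_contr; elim=> [|t IH] x; first by rewrite path_mean0 mul1r.
rewrite path_meanS exprSr -mulrA.
have := ler_wpM2l (exprn_ge0 t rho0) (f_contr x); apply: le_trans.
rewrite mulrDr [rho ^+ t * (q * _)]mulrCA [rho ^+ t * ((1 - q) * _)]mulrCA.
by apply: lerD; apply: ler_wpM2l; rewrite ?subr_ge0 ?IH.
Qed.

End ClosedLoop.

Section RiccatiDecrease.
Variables (R : realType) (n m : nat) (A : 'M[R]_n) (B : 'M[R]_(n, m)).
Variables (Q P : 'M[R]_n) (Rw : 'M[R]_m).

Definition riccati_corr : 'M[R]_n :=
  A^T *m P *m B *m invmx (Rw + B^T *m P *m B) *m B^T *m P *m A.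

Let K := gain A B Rw P.

Definition lmi_mx (qh e : R) : 'M[R]_n :=
  Q + (1 - e) *: (K^T *m Rw *m K) - (e - qh) *: riccati_corr.

Hypotheses (pRw : posdef Rw) (pP : posdef P).

Let W := Rw + B^T *m P *m B.

Lemma posdef_gain_weight : posdef W.
Proof.
have [Rs Rw_gt0] := pRw; have [Ps _] := pP; split.
  by rewrite /W linearD /= Rs !trmx_mul trmxK Ps mulmxA.
move=> u nu; rewrite -/(bform W u u) bformMD bform_congr.
by rewrite ltr_wpDr ?Rw_gt0 //; apply: posdef_qform_ge0.
Qed.

Let W_unit : W \in unitmx := posdef_unitmx posdef_gain_weight.

Let gainE : K = - (invmx W *m (B^T *m P *m A)).
Proof. by rewrite /K /gain !mulmxA. Qed.

Lemma qform_riccati_corr x : qform riccati_corr x = qform W (K *m x).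
Proof.
have [Ps _] := pP; have [Ws _] := posdef_gain_weight.
have -> : riccati_corr = (B^T *m P *m A)^T *m invmx W *m (B^T *m P *m A).
  by rewrite /riccati_corr -/W !trmx_mul trmxK Ps !mulmxA.
rewrite /qform gainE mulNmx bformNl bformNr opprK -bform_congr.
by rewrite [(invmx W *m _)^T]trmx_mul trmx_inv Ws !mulmxA (mulmxKV W_unit).
Qed.

Lemma riccati_mean_decrease (qh q : R) x : riccati A B Q Rw qh P ->
  q * qform P (cl_mx A B K false *m x) + (1 - q) * qform P (cl_mx A B K true *m x) =
  qform P x - (qform Q x + (1 - q) * qform Rw (K *m x) + (qh - q) * qform riccati_corr x).
Proof.
move=> ricP; have [Ps _] := pP.
rewrite /cl_mx scale0r addr0 scale1r qform_riccati_corr.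
set u := K *m x.
have hP : qform P x = qform Q x + qform P (A *m x) - (1 - qh) * qform W u.
  by rewrite -qform_riccati_corr {1}ricP /qform !bformMD bformMN bformMZ bform_congr.
have hW : qform W u = qform Rw u + qform P (B *m u) by rewrite /qform bformMD bform_congr.
have cross : bform P (A *m x) (B *m u) = - qform W u.
  rewrite bform_tr Ps bform_mulmxl /qform {3}/u gainE mulNmx bformNr opprK.
  by rewrite -(mulmxA (invmx W)) bform_mulmxr (mulmxV W_unit) !mulmxA.
have cross' : bform P (B *m u) (A *m x) = - qform W u by rewrite bform_tr Ps.
have -> : qform P ((A + B *m K) *m x) = qform P (A *m x) + bform P (A *m x) (B *m u)
     + bform P (B *m u) (A *m x) + qform P (B *m u).
  by rewrite /qform mulmxDl -mulmxA -/u !bformDl !bformDr !addrA.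
rewrite cross cross' hP; move: (qform W u) hW => w ->; ring.
Qed.

Lemma lmi_mean_decrease (qh q e : R) x : riccati A B Q Rw qh P -> q <= e ->
  q * qform P (cl_mx A B K false *m x) + (1 - q) * qform P (cl_mx A B K true *m x) <=
  qform P x - qform (lmi_mx qh e) x.
Proof.
move=> ricP qe; rewrite /lmi_mx (@riccati_mean_decrease qh q x ricP) lerD2l lerN2.
have corr_ge0 : 0 <= qform riccati_corr x.
  by rewrite qform_riccati_corr; apply: posdef_qform_ge0; apply: posdef_gain_weight.
have Rw_ge0 : 0 <= qform Rw (K *m x) by apply: posdef_qform_ge0.
rewrite /qform !bformMD !bformMN !bformMZ bform_congr -!/(qform _ _).
move: (qform Rw _) (qform riccati_corr x) Rw_ge0 corr_ge0 => r g r0 g0.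
have : 0 <= (e - q) * (r + g) by rewrite mulr_ge0 ?subr_ge0 ?addr_ge0.
nra.
Qed.

End RiccatiDecrease.

Section LyapunovDecay.
Variables (R : realType) (n m : nat).
Variables (A : 'M[R]_n) (B : 'M[R]_(n, m)) (K : 'M[R]_(m, n)).

Lemma lyapunov_path_mean_geometric (q : R) (P M : 'M[R]_n) :
  0 <= q <= 1 -> posdef P -> posdef M ->
  (forall x, q * qform P (cl_mx A B K false *m x) + (1 - q) * qform P (cl_mx A B K true *m x)
     <= qform P x - qform M x) ->
  exists2 C, 0 <= C & exists2 rho, 0 <= rho < 1 &
    forall t x, path_mean A B K q (qform 1%:M) t x <= C * rho ^+ t * qform 1%:M x.
Proof.
move=> q01 pP pM decr; have [rho /andP[rho0 rho1] contr] := posdef_qform_contraction pP pM.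
have [c c_gt0 Hc] := posdef_norm_le pP; have [d d_ge0 Hd] := qform_le_norm P.
exists (c * d); first by rewrite mulr_ge0 // ltW.
exists rho => [|t x]; first by rewrite rho0.
have pmP_le := path_mean_geometric q01 rho0 (fun x => le_trans (decr x) (contr x)) t x.
apply: le_trans (path_mean_le A B K t x q01 Hc) _; rewrite -!mulrA ler_wpM2l ?(ltW c_gt0) //.
apply: le_trans pmP_le _; rewrite mulrCA ler_wpM2l ?exprn_ge0 //.
Qed.

End LyapunovDecay.

Section MeanSquare.
Context (R : realType) (n : nat) (d : measure_display) (T : measurableType d).
Variables (P : probability T R) (x0 : T -> 'cV[R]_n).
Hypothesis mx0 : forall i, measurable_fun setT (fun w => x0 w i 0).
Hypothesis ix0 : forall i, P.-integrable setT (fun w => (x0 w i 0 ^+ 2)%:E).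

Lemma measurable_qform (M : 'M[R]_n) : measurable_fun setT (fun w => qform M (x0 w)).
Proof.
rewrite (_ : (fun w => _) = fun w => \sum_(j <- index_enum 'I_n)
   (\sum_(i <- index_enum 'I_n) x0 w i 0 * M i j) * x0 w j 0); last first.
  by apply: funext => w; rewrite /qform bformE.
by apply: measurable_sum => j; apply: measurable_funM => //; apply: measurable_sum => i;
  apply: measurable_funM.
Qed.

Lemma measurable_qform1_mulmx (F : 'M[R]_n) :
  measurable_fun setT (fun w => qform 1%:M (F *m x0 w)).
Proof.
under eq_fun => w do rewrite /qform -bform_congr -/(qform _ _).
exact: measurable_qform.
Qed.

Lemma integrable_sqnorm : P.-integrable setT (fun w => (qform 1%:M (x0 w))%:E).
Proof.
under eq_fun => w do rewrite qform1E -sumEFin.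
by apply: integrable_sum.
Qed.

Lemma integrable_qform1_mulmx (F : 'M[R]_n) :
  P.-integrable setT (fun w => (qform 1%:M (F *m x0 w))%:E).
Proof.
have [c c_ge0 Hc] := qform_le_norm (F^T *m 1%:M *m F).
apply: (le_integrable measurableT _ _ (integrableZl measurableT c integrable_sqnorm)) => [|w _].
  exact/measurable_EFinP/measurable_qform1_mulmx.
rewrite -EFinM !abse_EFin lee_fin !ger0_norm ?mulr_ge0 ?qform1_ge0 //.
by rewrite /qform -bform_congr Hc.
Qed.

Section ClosedLoopEnergy.
Variables (m : nat) (A : 'M[R]_n) (B : 'M[R]_(n, m)) (K : 'M[R]_(m, n)) (q : R).
Hypothesis q01 : 0 <= q <= 1.

Lemma ms_energyE t : (ms_energy A B K q P x0 t)%:E =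
  (\int[P]_w (path_mean A B K q (qform 1%:M) t (x0 w))%:E)%E.
Proof.
rewrite /ms_energy /path_mean -sumEFin.
under [RHS]eq_integral => w _ do rewrite -sumEFin.
rewrite integral_sum // => [|s]; last first.
  under eq_fun => w do rewrite EFinM cl_stateE.
  exact/(integrableZl measurableT)/integrable_qform1_mulmx.
apply: eq_bigr => s _; under eq_integral => w _ do rewrite EFinM cl_stateE.
rewrite (integralZl measurableT) ?integrable_qform1_mulmx // EFinM; congr (_ * _)%E.
rewrite [X in fine X](eq_integral (fun w =>
  (qform 1%:M (cl_transition A B K (ext_path s) t *m x0 w))%:E)) => [|w _].
  by rewrite fineK //; apply: integrable_fin_num => //; apply: integrable_qform1_mulmx.
by rewrite qform1_tr cl_stateE.
Qed.

Lemma measurable_path_mean t :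
  measurable_fun setT (fun w => path_mean A B K q (qform 1%:M) t (x0 w)).
Proof.
apply: measurable_sum => s; apply: measurable_funM => //.
under eq_fun => w do rewrite cl_stateE.
exact: measurable_qform1_mulmx.
Qed.

Lemma ms_energy_le C rho t : 0 <= C -> 0 <= rho ->
  (forall x, path_mean A B K q (qform 1%:M) t x <= C * rho ^+ t * qform 1%:M x) ->
  0 <= ms_energy A B K q P x0 t <=
    C * rho ^+ t * fine (\int[P]_w (qform 1%:M (x0 w))%:E)%E.
Proof.
move=> C0 rho0 decay; have C_rho_ge0 : 0 <= C * rho ^+ t by rewrite mulr_ge0 ?exprn_ge0.
have E_fin := integrable_fin_num measurableT integrable_sqnorm.
have path_mean_ge0 w : 0 <= path_mean A B K q (qform 1%:M) t (x0 w).
  by apply: path_mean_ge0 => // y; apply: qform1_ge0.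
rewrite -!lee_fin ms_energyE EFinM fineK //; apply/andP; split.
  by apply: integral_ge0 => w _; rewrite lee_fin.
rewrite -ge0_integralZl ?lee_fin //; last first.
- by move=> w _; rewrite lee_fin qform1_ge0.
- exact/measurable_EFinP/measurable_qform.
apply: ge0_le_integral => //.
- by move=> w _; rewrite lee_fin.
- exact/measurable_EFinP/measurable_path_mean.
- under eq_fun => w do rewrite -EFinM.
  exact/measurable_EFinP/measurable_funM/measurable_qform.
- by move=> w _; rewrite -EFinM lee_fin decay.
Qed.

End ClosedLoopEnergy.
End MeanSquare.

Lemma ms_stabilizes_of_path_mean_geometric (R : realType) (n m : nat)
    (A : 'M[R]_n) (B : 'M[R]_(n, m)) (K : 'M[R]_(m, n)) (q C rho : R) :
  0 <= q <= 1 -> 0 <= C -> 0 <= rho < 1 ->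
  (forall t x, path_mean A B K q (qform 1%:M) t x <= C * rho ^+ t * qform 1%:M x) ->
  ms_stabilizes A B K q.
Proof.
move=> q01 C0 /andP[rho0 rho1] decay d T P x0 mx0 ix0.
set E := fine (\int[P]_w (qform 1%:M (x0 w))%:E)%E.
apply: (@squeeze_cvgr _ _ _ _ (fun=> 0) (geometric (C * E) rho)).
- by apply: nearW => t; rewrite /geometric /= mulrAC; apply: ms_energy_le.
- exact: cvg_cst.
- by apply: cvg_geometric; rewrite ger0_norm.
Qed.

Section Hoeffding.
Variable R : realType.

Lemma is_derive_eqfun (f g : R -> R) (x df dg : R) :
  f = g -> df = dg -> is_derive x 1 f df -> is_derive x 1 g dg.
Proof. by move=> <- <-. Qed.

Lemma is_derive_ge0_le0 (f df : R -> R) :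
  (forall x : R, is_derive x 1 f (df x)) -> (forall x, 0 <= x -> 0 <= df x) ->
  forall x, 0 <= x -> f 0 <= f x.
Proof.
move=> f_df df_ge0 x x_ge0.
apply: (ger0_derive1_ndecr (a := 0) (b := x)) => //.
- move=> y; rewrite in_itv /= => /andP[y_gt0 _].
  by rewrite derive1E (@derive_val _ _ _ _ _ _ _ (f_df y)) df_ge0 // ltW.
- apply: continuous_subspaceT => y.
  by apply: differentiable_continuous; apply/derivable1_diffP; case: (f_df y).
Qed.

Variable q : R.
Hypothesis q01 : 0 <= q <= 1.

Let v (t : R) := (1 - q) * expR t + q.

Let v_gt0 (t : R) : 0 < v t.
Proof.
case/andP: q01 => q0 q1; rewrite /v.
have [->|qn1] := eqVneq q 1; first by rewrite subrr mul0r add0r.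
by rewrite ltr_pwDl // mulr_gt0 ?expR_gt0 // subr_gt0 lt_neqAle qn1.
Qed.

Let v_derive (t : R) : is_derive t 1 v ((1 - q) * expR t).
Proof.
apply: is_derive_eqfun (is_deriveD (is_deriveZ (1 - q) (is_derive_expR t))
                                    (@is_derive_cst _ R R q t 1)) => //.
by rewrite addr0.
Qed.

Let h' (t : R) := t / 4 - q + q / v t.

Let h'_derive (t : R) : is_derive t 1 h' (4^-1 - q * (1 - q) * expR t / v t ^+ 2).
Proof.
have v_neq0 : v t != 0 by rewrite gt_eqF.
apply: is_derive_eqfun (is_deriveD (is_deriveD (is_deriveZ 4^-1 (@is_derive_id _ R t 1))
  (@is_derive_cst _ R R (- q) t 1)) (is_deriveZ q (is_deriveV v_neq0 (v_derive t)))).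
  by apply: funext => y; rewrite /h' /= mulrC.
by rewrite /= addr0 /GRing.scale /=; field.
Qed.

(* [h] and [h'] vanish at 0 and [h'' >= 0] by AM-GM ([4 q (1 - q) e^t <= v t ^ 2]),
   so [h >= 0] on [0, +oo), which is the claim after exponentiation. *)
Let h (t : R) := t ^+ 2 / 8 + (1 - q) * t - ln (v t).

Let h_derive (t : R) : is_derive t 1 h (h' t).
Proof.
have ln_v := is_derive1_comp (is_derive1_ln (v_gt0 t)) (v_derive t).
apply: is_derive_eqfun (is_deriveD (is_deriveD (is_deriveZ 8^-1
  (is_deriveX 2 (@is_derive_id _ R t 1))) (is_deriveZ (1 - q) (@is_derive_id _ R t 1)))
  (is_deriveN ln_v)).
  by apply: funext => y; rewrite /h /= mulrC.
rewrite /h' /GRing.scale /= !mulr1 expr1.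
have -> : (1 - q) * expR t = v t - q by rewrite /v addrK.
by field; rewrite gt_eqF.
Qed.

Lemma hoeffding_bernoulli t : 0 <= t ->
  1 - q + q * expR (- t) <= expR (t ^+ 2 / 8 - q * t).
Proof.
move=> t_ge0; case/andP: q01 => q0 q1.
have v0 : v 0 = 1 by rewrite /v expR0 mulr1 subrK.
have h'_ge0 x : 0 <= x -> 0 <= h' x.
  have h'0 : h' 0 = 0 by rewrite /h' v0 divr1; ring.
  move=> x_ge0; rewrite -h'0; apply: (is_derive_ge0_le0 h'_derive) => // y _.
  rewrite subr_ge0 ler_pdivrMr ?exprn_gt0 //.
  have : 0 <= ((1 - q) * expR y - q) ^+ 2 by apply: sqr_ge0.
  rewrite /v; move: (expR y) => e; nra.
have : h 0 <= h t by apply: (is_derive_ge0_le0 h_derive).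
rewrite {1}/h v0 ln1 expr0n /= mul0r !add0r mulr0 subr0 subr_ge0 -ler_expR lnK ?posrE //.
have -> : 1 - q + q * expR (- t) = expR (- t) * v t.
  by rewrite /v mulrDr mulrCA -expRD addNr expR0 mulr1 [expR _ * q]mulrC.
have -> : t ^+ 2 / 8 - q * t = - t + (t ^+ 2 / 8 + (1 - q) * t) by ring.
by move=> vt_le; rewrite expRD ler_wpM2l // ltW // expR_gt0.
Qed.

End Hoeffding.

Section SampleMeanTail.
Variable R : realType.

Lemma bern_mgf (q th : R) N :
  \sum_(s : {ffun 'I_N -> bool}) bern_prob q s * expR (- th * \sum_(i < N) (~~ s i)%:R)
  = (1 - q + q * expR (- th)) ^+ N.
Proof.
have -> : 1 - q + q * expR (- th) =
    \sum_(b : bool) (if b then 1 - q else q) * expR (- th * (~~ b)%:R).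
  by rewrite big_bool /= mulr0 expR0 !mulr1.
rewrite -[in RHS](card_ord N) -prodr_const bigA_distr_bigA /=.
apply: eq_bigr => s _; rewrite big_split /= mulr_sumr expR_sum.
by congr (_ * _); apply: eq_bigr => i _; rewrite !ffunE.
Qed.

(* Chernoff bound with exponent [4 t], the minimiser of [th ^ 2 / 8 - th * t]. *)
Lemma qhat_tail_le (q t : R) N : 0 <= q <= 1 -> (0 < N)%N -> 0 <= t ->
  \sum_(s : {ffun 'I_N -> bool} | qhat R s <= q - t) bern_prob q s
    <= expR (- (2 * N%:R * t ^+ 2)).
Proof.
move=> q01 N_gt0 t_ge0; have N_gt0' : 0 < N%:R :> R by rewrite ltr0n.
set th := 4 * t; have th_ge0 : 0 <= th by rewrite mulr_ge0.
set Z := fun s : {ffun 'I_N -> bool} => \sum_(i < N) (~~ s i)%:R : R.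
have markov : \sum_(s : {ffun 'I_N -> bool} | qhat R s <= q - t) bern_prob q s <=
    \sum_s bern_prob q s * expR (th * (N%:R * (q - t) - Z s)).
  rewrite big_mkcond /=; apply: ler_sum => s _.
  case: ifP => [qhat_le|_]; last by rewrite mulr_ge0 ?bern_prob_ge0 // ltW // expR_gt0.
  rewrite -[X in X <= _]mulr1 ler_wpM2l ?bern_prob_ge0 //.
  apply: le_trans (expR_ge1Dx _); rewrite lerDl mulr_ge0 // subr_ge0.
  by move: qhat_le; rewrite /qhat /Z ler_pdivrMr // mulrC.
apply: (le_trans markov).
under eq_bigr => s _ do rewrite mulrBr expRD mulrCA -mulNr.
rewrite -mulr_sumr bern_mgf.
apply: le_trans (ler_wpM2l (ltW (expR_gt0 _)) (lerXn2r N _ _ (hoeffding_bernoulli q01 th_ge0))) _.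
- case/andP: q01 => q0 q1.
  by rewrite nnegrE addr_ge0 ?subr_ge0 // mulr_ge0 // ltW // expR_gt0.
- by rewrite nnegrE ltW // expR_gt0.
rewrite -expRM_natl -expRD ler_expR /th; nra.
Qed.

Lemma qhat_tail_le_Delta (q beta : R) N : 0 <= q <= 1 -> (0 < N)%N -> 0 < beta < 1 ->
  \sum_(s : {ffun 'I_N -> bool} | qhat R s <= q - Delta N beta) bern_prob q s <= beta.
Proof.
move=> q01 N_gt0 /andP[beta_gt0 beta_lt1]; have N_gt0' : 0 < N%:R :> R by rewrite ltr0n.
have ln_ge0 : 0 <= ln (2 / beta).
  by rewrite ln_ge0 // ler_pdivlMr // mul1r (le_trans (ltW beta_lt1)) // ler1n.
apply: le_trans (qhat_tail_le q01 N_gt0 (sqrtr_ge0 _)) _.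
rewrite sqr_sqrtr ?divr_ge0 ?mulr_ge0 ?ler0n //.
rewrite mulrC divfK ?mulf_neq0 ?pnatr_eq0 -?lt0n // expRN lnK ?posrE ?divr_gt0 //.
rewrite invf_div ler_pdivrMr //; lra.
Qed.

Lemma sample_prob_ge (q a b : R) N (E : {ffun 'I_N -> bool} -> Prop) :
  0 <= q <= 1 -> (forall s, a < qhat R s -> E s) ->
  \sum_(s : {ffun 'I_N -> bool} | qhat R s <= a) bern_prob q s <= b ->
  1 - b <= sample_prob q E.
Proof.
move=> q01 HE tail_le; have := bern_prob_sum1 q N.
rewrite (bigID (fun s => `[< E s >])) /= -/(sample_prob q E) => sum1.
suff : \sum_(s | ~~ `[< E s >]) bern_prob q s <= b by lra.
apply: le_trans tail_le; rewrite [X in _ <= X]big_mkcond [X in X <= _]big_mkcond /=.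
apply: ler_sum => s _; case: (asboolP (E s)) => [_|nEs] /=.
  by case: ifP => // _; apply: bern_prob_ge0.
suff -> : qhat R s <= a by [].
by rewrite leNgt; apply/negP => /HE.
Qed.

End SampleMeanTail.

Section LmiCertificate.
Variables (R : realType) (n m : nat) (A : 'M[R]_n) (B : 'M[R]_(n, m)).
Variables (Q P : 'M[R]_n) (Rw : 'M[R]_m).

Let K := gain A B Rw P.

Lemma ms_stabilizes_of_lmi (q qh e : R) : 0 <= q <= 1 ->
  posdef Rw -> posdef P -> riccati A B Q Rw qh P ->
  q <= e -> posdef (lmi_mx A B Q P Rw qh e) -> ms_stabilizes A B K q.
Proof.
move=> q01 pRw pP ricP qe p_lmi.
have decr x := lmi_mean_decrease pRw pP x ricP qe.
have [C C_ge0 [rho rho01 decay]] := lyapunov_path_mean_geometric q01 pP p_lmi decr.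
exact: ms_stabilizes_of_path_mean_geometric q01 C_ge0 rho01 decay.
Qed.

Lemma lt_qbar_lmi_feasible (q qh : R) : 0 <= q -> q < qbar A B Q Rw qh P ->
  exists2 e, q < e & posdef (lmi_mx A B Q P Rw qh e).
Proof.
rewrite /qbar -/K -/(riccati_corr A B P Rw); set S := [set x | _]%classic => q_ge0.
have [[e Se]|S0] := pselect (S !=set0)%classic.
  by case/(sup_gt (ex_intro _ e Se)) => e' [_ [_ lmi_e']] qe'; exists e'.
suff -> : S = set0%classic by rewrite sup0 => /lt_le_trans/(_ q_ge0); rewrite ltxx.
by apply/seteqP; split => // x Sx; apply: S0; exists x.
Qed.

End LmiCertificate.

Theorem theorem7 (R : realType) (n m : nat) (A : 'M[R]_n) (B : 'M[R]_(n, m))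
  (Q : 'M[R]_n) (Rw : 'M[R]_m) (q qc beta : R) (N : nat) :
  stabilizable A B -> posdef Q -> posdef Rw ->
  0 < q < 1 ->
  (forall p : R, 0 <= p < qc ->
     exists! X : 'M[R]_n, posdef X /\ riccati A B Q Rw p X) ->
  q < qc ->
  0 < beta < 1 ->
  (0 < N)%N ->
  sample_prob q (fun s : {ffun 'I_N -> bool} =>
    qhat R s < qc ->
    forall Ph : 'M[R]_n, posdef Ph -> riccati A B Q Rw (qhat R s) Ph ->
      qhat R s + Delta N beta <= qbar A B Q Rw (qhat R s) Ph ->
      ms_stabilizes A B (gain A B Rw Ph) q)
  >= 1 - beta.
Proof.
move=> _ _ pRw /andP[q_gt0 q_lt1] _ _ beta01 N_gt0.
have q01 : 0 <= q <= 1 by rewrite !ltW.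
apply: (sample_prob_ge (a := q - Delta N beta) q01 _ (qhat_tail_le_Delta q01 N_gt0 beta01)).
move=> s qhat_gt _ Ph pPh ricPh qbar_ge.
have q_lt_qbar : q < qbar A B Q Rw (qhat R s) Ph.
  by apply: lt_le_trans qbar_ge; rewrite -ltrBlDr.
have [e qe lmi_e] := lt_qbar_lmi_feasible (ltW q_gt0) q_lt_qbar.
exact: ms_stabilizes_of_lmi q01 pRw pPh ricPh (ltW qe) lmi_e.
Qed.
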